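(* Let $\mathbb{k}$ be any field and $\mathfrak{h}$ a right Leibniz algebra over $\mathbb{k}$ of finite dimension $n$ with ordered basis $\mathbf{b}=(y_1,\ldots,y_n)$ and structure constants $C^i_{jk}$ given by $[y_j,y_k]=\sum_iC^i_{jk}y_i$. Let $\mathcal{G}^i_j,\bar{\mathcal{G}}^i_j$ be the generators of $\mathcal{O}(\mathrm{Aut}(\mathfrak{h}))$ relative to $\mathbf{b}$, and let $\tilde y$ denote the image of $y\in\mathfrak{h}$ in $\mathfrak{h}_{Lie}$. Then there exists a unique Hopf pairing $\langle-,-\rangle\colon U(\mathfrak{h}_{Lie})\otimes\mathcal{O}(\mathrm{Aut}(\mathfrak{h}))\to\mathbb{k}$ such that $\langle\tilde y_k,\mathcal{G}^i_j\rangle=-C^i_{jk}$ for all $i,j,k\in\{1,\ldots,n\}$. This Hopf pairing does not depend on the choice of basis $\mathbf{b}$.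
   Context: A right Leibniz algebra is a vector space $\mathfrak{h}$ with a bilinear bracket satisfying $[[x,y],z]=[[x,z],y]+[x,[y,z]]$. $\mathfrak{h}_{Lie}$ is the quotient of $\mathfrak{h}$ by the two-sided ideal generated by all $[x,x]$; $U(\mathfrak{h}_{Lie})$ is its universal enveloping algebra with its standard Hopf algebra structure. $\mathcal{O}(\mathrm{Aut}(\mathfrak{h}))$ is the coordinate Hopf algebra of the affine algebraic group of automorphisms of $\mathfrak{h}$; relative to $\mathbf{b}$ it is the commutative algebra generated by $\mathcal{G}^i_j,\bar{\mathcal{G}}^i_j$ ($\mathcal{G}^i_j$ gives the $(i,j)$ matrix entry of an automorphism $\psi$ in basis $\mathbf{b}$, $\psi(y_j)=\sum_i\mathcal{G}^i_j(\psi)y_i$; $\bar{\mathcal{G}}^i_j$ that of $\psi^{-1}$) with relations $\sum_{l,m}C^k_{lm}\mathcal{G}^l_i\mathcal{G}^m_j=\sum_r\mathcal{G}^k_rC^r_{ij}$, $\sum_k\mathcal{G}^i_k\bar{\mathcal{G}}^k_j=\delta^i_j=\sum_k\bar{\mathcal{G}}^i_k\mathcal{G}^k_j$, and Hopf structure $\Delta(\mathcal{G}^i_j)=\sum_k\mathcal{G}^i_k\otimes\mathcal{G}^k_j$, $\Delta(\bar{\mathcal{G}}^i_j)=\sum_k\bar{\mathcal{G}}^k_j\otimes\bar{\mathcal{G}}^i_k$, $\epsilon(\mathcal{G}^i_j)=\epsilon(\bar{\mathcal{G}}^i_j)=\delta^i_j$, $S(\mathcal{G}^i_j)=\bar{\mathcal{G}}^i_j$,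 $S(\bar{\mathcal{G}}^i_j)=\mathcal{G}^i_j$. A Hopf pairing $B\otimes H\to\mathbb{k}$ of bialgebras is a bilinear form (not required nondegenerate) with $\langle\Delta_B(b),h\otimes k\rangle=\langle b,hk\rangle$, $\langle b,1\rangle=\epsilon_B(b)$, $\langle b\otimes c,\Delta_H(h)\rangle=\langle bc,h\rangle$, $\langle 1,h\rangle=\epsilon_H(h)$, with componentwise pairing of tensor products. *)

From HB Require Import structures.
From mathcomp Require Import all_boot all_order all_algebra.
From mathcomp Require Import mpoly.

Set Implicit Arguments.
Unset Strict Implicit.
Unset Printing Implicit Defensive.

Import GRing.Theory.
Local Open Scope ring_scope.

(* U(h_Lie) is presented as a quotient of the tensor algebra T(h), whose      *)
(* linear basis is the set of words (seq 'I_n) in the basis letters y_i.       *)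
(* O(Aut h) is presented (as in the paper) as the quotient of the polynomial  *)
(* ring P = K[G^i_j, Gbar^i_j] by the ideal of the listed relations.          *)
(* A bilinear form on U(h_Lie) x O(Aut h) is the same thing as a function     *)
(* pr : words -> P -> K, linear in the second argument (and extended          *)
(* linearly in the first), vanishing on (kernel of T(h) -> U(h_Lie)) x P and  *)
(* on T(h) x (relation ideal).  The Hopf pairing axioms are then stated on    *)
(* these representatives; P (x) P is realized as the polynomial ring in twice *)
(* as many variables.                                                         *)

Section Defs.
Variables (K : fieldType) (V : vectType K) (br : V -> V -> V) (n : nat).

Definition bilinear_bracket : Prop :=
  (forall (a : K) (x y z : V), br (a *: x + y) z = a *: br x z + br y z) /\
  (forall (a : K) (x y z : V), br z (a *: x + y) = a *: br z x + br z y).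

Definition right_leibniz : Prop :=
  forall x y z : V, br (br x y) z = br (br x z) y + br x (br y z).

Definition in_leib_ideal (z : V) : Prop :=
  forall S : {vspace V},
    (forall x, br x x \in S) ->
    (forall x s, s \in S -> br x s \in S) ->
    (forall x s, s \in S -> br s x \in S) ->
    z \in S.

(* structure constants: [y_j, y_k] = sum_i C^i_{jk} y_i ;  Cst b i j k = C^i_{jk} *)
Definition Cst (b : n.-tuple V) (i j k : 'I_n) : K :=
  coord b i (br (tnth b j) (tnth b k)).

(* variables of the polynomial ring: (false,(i,j)) ~ G^i_j, (true,(i,j)) ~ Gbar^i_j *)
Definition Idx := (bool * ('I_n * 'I_n))%type.
Definition Nv : nat := #|{: Idx}|.
Definition Pol := {mpoly K[Nv]}.
Definition Pol2 := {mpoly K[Nv + Nv]}.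

Definition Gv (i j : 'I_n) : Pol := 'X_(enum_rank ((false, (i, j)) : Idx)).
Definition Gbv (i j : 'I_n) : Pol := 'X_(enum_rank ((true, (i, j)) : Idx)).

Definition rel_hom (b : n.-tuple V) (i j k : 'I_n) : Pol :=
  \sum_(l < n) \sum_(m < n) Cst b k l m *: (Gv l i * Gv m j)
  - \sum_(r < n) Cst b r i j *: Gv k r.
Definition rel_inv1 (i j : 'I_n) : Pol :=
  \sum_(k < n) Gv i k * Gbv k j - (i == j)%:R.
Definition rel_inv2 (i j : 'I_n) : Pol :=
  \sum_(k < n) Gbv i k * Gv k j - (i == j)%:R.

Definition epsO (f : Pol) : K :=
  meval (fun v : 'I_Nv => let x := enum_val v in (x.2.1 == x.2.2)%:R) f.

Definition XL (v : 'I_Nv) : Pol2 := 'X_(lshift Nv v).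
Definition XR (v : 'I_Nv) : Pol2 := 'X_(rshift Nv v).
Definition Delta_var (x : Idx) : Pol2 :=
  match x with
  | (false, (i, j)) =>
      \sum_(k < n) XL (enum_rank ((false, (i, k)) : Idx)) * XR (enum_rank ((false, (k, j)) : Idx))
  | (true, (i, j)) =>
      \sum_(k < n) XL (enum_rank ((true, (k, j)) : Idx)) * XR (enum_rank ((true, (i, k)) : Idx))
  end.
Definition DeltaO (f : Pol) : Pol2 :=
  comp_mpoly [tuple Delta_var (enum_val v) | v < Nv] f.

Definition mnmL (m : 'X_{1..Nv + Nv}) : 'X_{1..Nv} := [multinom m (lshift Nv i) | i < Nv].
Definition mnmR (m : 'X_{1..Nv + Nv}) : 'X_{1..Nv} := [multinom m (rshift Nv i) | i < Nv].

(* bilinear extension  <u (x) v, F> = sum <u,F1><v,F2> *)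
Definition pair2 (pr : seq 'I_n -> Pol -> K) (u v : seq 'I_n) (F : Pol2) : K :=
  \sum_(m <- msupp F) F@_m * pr u 'X_[mnmL m] * pr v 'X_[mnmR m].

Definition is_hopf_pairing (b : n.-tuple V) (pr : seq 'I_n -> Pol -> K) : Prop :=
  (forall w (a : K) (f g : Pol), pr w (a *: f + g) = a * pr w f + pr w g) /\
  (* well defined on U(h_Lie): vanishing on  y_a y_c - y_c y_a - [y_a, y_c] *)
  (forall (u v : seq 'I_n) (a c : 'I_n) (f : Pol),
     pr (u ++ a :: c :: v) f - pr (u ++ c :: a :: v) f
     - \sum_(d < n) Cst b d a c * pr (u ++ d :: v) f = 0) /\
  (* ... and on the image of the Leibniz kernel of h -> h_Lie *)
  (forall (u v : seq 'I_n) (z : V) (f : Pol), in_leib_ideal z ->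
     \sum_(d < n) coord b d z * pr (u ++ d :: v) f = 0) /\
  (* well defined on O(Aut h): vanishing on the relation ideal *)
  (forall w (g : Pol) (i j k : 'I_n),
     pr w (g * rel_hom b i j k) = 0 /\ pr w (g * rel_inv1 i j) = 0 /\
     pr w (g * rel_inv2 i j) = 0) /\
  (* <Delta_U(w), f (x) g> = <w, f g>, Delta_U(y) = y (x) 1 + 1 (x) y *)
  (forall (w : seq 'I_n) (f g : Pol),
     \sum_(m : (size w).-tuple bool) pr (mask m w) f * pr (mask (map negb m) w) g
     = pr w (f * g)) /\
  (* <w, 1> = eps_U(w) *)
  (forall w, pr w 1 = (w == [::])%:R) /\
  (forall (u v : seq 'I_n) (f : Pol), pr (u ++ v) f = pair2 pr u v (DeltaO f)) /\
  (forall f, pr [::] f = epsO f) /\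
  (forall i j k : 'I_n, pr [:: k] (Gv i j) = - Cst b i j k).

(* change of basis from b' to b:  y'_j = sum_c A_{cj} y_c, A_{cj} = coord b c y'_j,
   y_a = sum_i Ainv_{ia} y'_i, Ainv_{ia} = coord b' i y_a *)
Definition phiO_var (b b' : n.-tuple V) (x : Idx) : Pol :=
  let: (bar, (i, j)) := x in
  \sum_(a < n) \sum_(c < n)
     (coord b' i (tnth b a) * coord b c (tnth b' j)) *: (if bar then Gbv a c else Gv a c).
(* the identification O(Aut h)_{b'} -> O(Aut h)_b *)
Definition phiO (b b' : n.-tuple V) (f : Pol) : Pol :=
  comp_mpoly [tuple phiO_var b b' (enum_val v) | v < Nv] f.

(* the pairing relative to b, transported to the generators relative to b'
   (words in y' are expanded as linear combinations of words in y) *)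
Definition transport (b b' : n.-tuple V) (pr : seq 'I_n -> Pol -> K)
    (w : seq 'I_n) (f : Pol) : K :=
  \sum_(s : (size w).-tuple 'I_n)
    (\prod_(t < size w) coord b (tnth s t) (tnth b' (tnth (in_tuple w) t)))
    * pr s (phiO b b' f).

End Defs.

(* For a matrix M, let D_M be the derivation of K[G, Gbar] with D_M G = - G M
   and D_M Gbar = M Gbar (matrix notation).  It is left invariant:
   Delta o D_M = (id (x) D_M) o Delta.  Hence, for any matrices R_1, ..., R_n,
     <y_a1 ... y_ak, f> := eps (D_(R_a1) ... D_(R_ak) f)
   is compatible with the coproduct of O(Aut h) (left invariance) and with its
   product (Leibniz rule).  Take for R_a the matrix of x |-> [x, y_a].  The right
   Leibniz identity says both that [D_(R_a), D_(R_c)] = D_(R_[y_a, y_c]), so that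
   the functional factors through U(h_Lie), and that x |-> [x, y_a] is a
   derivation of the bracket, so that D_(R_a) preserves the ideal of relations of
   O(Aut h), on which eps vanishes.  The Leibniz kernel is an ideal containing
   all [x, x], hence it annihilates h from the left and R_z = 0 on it.
   Conversely, a Hopf pairing restricted to one letter y_a is an eps-derivation,
   fixed on G by the normalisation and on Gbar by G Gbar = 1, and compatibility
   with the coproduct of O(Aut h) extends uniqueness to all words.  A change of
   basis conjugates the matrices R_a, and the identification of the two
   presentations of O(Aut h) intertwines the corresponding derivations. *)

From HB Require Import structures.
From mathcomp Require Import all_boot all_order all_algebra.
From mathcomp Require Import mpoly.
From mathcomp Require ssrcomplements.
From mathcomp Require Import ring.

Set Implicit Arguments.
Unset Strict Implicit.
Unset Printing Implicit Defensive.
Import GRing.Theory.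
Local Open Scope ring_scope.

Section MPolyDerivations.
Variables (K : fieldType) (k : nat).
Implicit Types p q : {mpoly K[k]}.

Lemma mpoly_alg_ind (P : {mpoly K[k]} -> Prop) :
  P 1 -> (forall i, P 'X_i) -> (forall c p, P p -> P (c *: p)) ->
  (forall p q, P p -> P q -> P (p + q)) -> (forall p q, P p -> P q -> P (p * q)) ->
  forall p, P p.
Proof.
move=> P1 PX PZ PD PM.
have P0 : P 0 by rewrite -(scale0r 1); apply: PZ.
have PXm m : P 'X_[m].
  rewrite mpolyXE_id; apply: big_ind => // i _.
  by elim: (m i) => [|e IH]; [rewrite expr0 | rewrite exprS; apply: PM].
by elim/mpolyind => // c m p _ _ Pp; apply: PD => //; apply: PZ.
Qed.

Section Along.
Variables (A : pzRingType) (phi : {rmorphism {mpoly K[k]} -> A}).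

Record derivation_along (L : {mpoly K[k]} -> A) : Prop := DerivationAlong {
  derivationD : forall p q, L (p + q) = L p + L q;
  derivationZ : forall c p, L (c *: p) = phi c%:MP * L p;
  derivationM : forall p q, L (p * q) = L p * phi q + phi p * L q }.

Variables (L : {mpoly K[k]} -> A) (dL : derivation_along L).

Lemma derivation1 : L 1 = 0.
Proof.
have := derivationM dL 1 1; rewrite mulr1 rmorph1 mulr1 mul1r -{1}[L 1]addr0.
by move/addrI <-.
Qed.

Lemma derivation0 : L 0 = 0.
Proof.
by have := derivationD dL 0 0; rewrite addr0 -{1}[L 0]addr0 => /addrI <-.
Qed.

Lemma derivationC c : L c%:MP = 0.
Proof.
by rewrite -[c%:MP]mulr1 mul_mpolyC (derivationZ dL) derivation1 mulr0.
Qed.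

Lemma derivationN p : L (- p) = - L p.
Proof. by apply/eqP; rewrite -subr_eq0 opprK -(derivationD dL) addNr derivation0. Qed.

Lemma derivationB p q : L (p - q) = L p - L q.
Proof. by rewrite (derivationD dL) derivationN. Qed.

Lemma derivation_sum I (r : seq I) (P : pred I) F :
  L (\sum_(i <- r | P i) F i) = \sum_(i <- r | P i) L (F i).
Proof. exact: (big_morph L (derivationD dL) derivation0). Qed.

Lemma derivation_natr m : L m%:R = 0.
Proof. by rewrite -mpolyC_nat derivationC. Qed.

End Along.

Lemma derivation_eq (A : pzRingType) (phi : {rmorphism {mpoly K[k]} -> A}) L1 L2 :
  derivation_along phi L1 -> derivation_along phi L2 ->
  (forall i, L1 'X_i = L2 'X_i) -> forall p, L1 p = L2 p.
Proof.
move=> d1 d2 eqX; apply: mpoly_alg_ind => //.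
- by rewrite (derivation1 d1) (derivation1 d2).
- by move=> c p Hp; rewrite (derivationZ d1) (derivationZ d2) Hp.
- by move=> p q Hp Hq; rewrite (derivationD d1) (derivationD d2) Hp Hq.
- by move=> p q Hp Hq; rewrite (derivationM d1) (derivationM d2) Hp Hq.
Qed.

Lemma mpoly_rmorph_eq (B : pzRingType) (f g : {rmorphism {mpoly K[k]} -> B}) :
  (forall c, f c%:MP = g c%:MP) -> (forall i, f 'X_i = g 'X_i) -> forall p, f p = g p.
Proof.
move=> eqC eqX; apply: mpoly_alg_ind => //.
- by rewrite !rmorph1.
- by move=> c p Hp; rewrite -mul_mpolyC !rmorphM eqC Hp.
- by move=> p q Hp Hq; rewrite !rmorphD Hp Hq.
- by move=> p q Hp Hq; rewrite !rmorphM Hp Hq.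
Qed.

Lemma derivation_linear L : derivation_along idfun L -> linear L.
Proof. by move=> dL c p q; rewrite (derivationD dL) (derivationZ dL) /= mul_mpolyC. Qed.

Lemma derivation_commutator L1 L2 :
  derivation_along idfun L1 -> derivation_along idfun L2 ->
  derivation_along idfun (fun p => L1 (L2 p) - L2 (L1 p)).
Proof.
move=> d1 d2; split => /= [p q|c p|p q].
- by rewrite !(derivationD d1, derivationD d2) opprD addrACA.
- rewrite !(derivationZ d1, derivationZ d2, derivationM d1, derivationM d2).
  by rewrite !(derivationC d1, derivationC d2) !mul0r !add0r mulrBr.
- by rewrite !(derivationM d1, derivationM d2, derivationD d1, derivationD d2) /=; ring.
Qed.

Lemma mderivXU (v w : 'I_k) : mderiv v 'X_w = (w == v)%:R :> {mpoly K[k]}.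
Proof.
rewrite mderivX mnm1E; case: eqP => [->|_]; last by rewrite scale0r.
have -> : (U_(v) - U_(v) = 0)%MM by apply/mnmP => i; rewrite mnmBE subnn mnm0E.
by rewrite mpolyX0 scale1r.
Qed.

Lemma mderiv_sum_derivation (I : finType) (idx : I -> 'I_k) (h : I -> {mpoly K[k]}) :
  derivation_along idfun (fun p => \sum_(i : I) mderiv (idx i) p * h i).
Proof.
split => [p q|c p|p q].
- by rewrite -big_split; apply: eq_bigr => i _; rewrite mderivD mulrDl.
- by rewrite mulr_sumr; apply: eq_bigr => i _; rewrite mderivZ mul_mpolyC scalerAl.
- rewrite mulr_suml mulr_sumr -big_split; apply: eq_bigr => i _ /=.
  by rewrite mderivM mulrDl -!mulrA [q * _]mulrC mulrA.
Qed.

End MPolyDerivations.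

Section DerivationTransfer.
Variables (K : fieldType) (k k' : nat) (psi : {lrmorphism {mpoly K[k]} -> {mpoly K[k']}}).

Lemma lrmorph_mpolyC c : psi c%:MP = c%:MP.
Proof. by rewrite -!alg_mpolyC linearZ rmorph1. Qed.

Lemma derivation_postcomp L : derivation_along idfun L -> derivation_along psi (psi \o L).
Proof.
move=> dL; split => /= [p q|c p|p q].
- by rewrite (derivationD dL) raddfD.
- by rewrite (derivationZ dL); apply: rmorphM.
- by rewrite (derivationM dL) /= raddfD; congr (_ + _); apply: rmorphM.
Qed.

Lemma derivation_precomp L : derivation_along idfun L -> derivation_along psi (L \o psi).
Proof.
move=> dL; split => /= [p q|c p|p q].
- by rewrite raddfD (derivationD dL).
- by rewrite linearZ (derivationZ dL) /= lrmorph_mpolyC.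
- by rewrite rmorphM (derivationM dL).
Qed.

End DerivationTransfer.

Section ScalarFunctionals.
Variables (K : fieldType) (k : nat) (l : {mpoly K[k]} -> K).
Hypothesis hl : scalar l.

Let lS : {scalar {mpoly K[k]}} := HB.pack l (GRing.isLinear.Build _ _ _ _ l hl).

Lemma scalarD f g : l (f + g) = l f + l g. Proof. exact: (linearD lS). Qed.
Lemma scalar_scale a f : l (a *: f) = a * l f. Proof. exact: (linearZ_LR lS). Qed.
Lemma scalarN f : l (- f) = - l f. Proof. exact: (linearN lS). Qed.
Lemma scalarB f g : l (f - g) = l f - l g. Proof. exact: (linearB lS). Qed.
Lemma scalar_sum I (r : seq I) (P : pred I) F :
  l (\sum_(i <- r | P i) F i) = \sum_(i <- r | P i) l (F i).
Proof. exact: (linear_sum lS). Qed.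

Lemma scalar_mpolyE f : l f = \sum_(m <- msupp f) f@_m * l 'X_[m].
Proof. by rewrite {1}[f]mpolyE scalar_sum; apply: eq_bigr => m _; rewrite scalar_scale. Qed.

End ScalarFunctionals.

Lemma scalar_comp (K : fieldType) (k k' : nat) (l : {mpoly K[k']} -> K)
    (L : {mpoly K[k]} -> {mpoly K[k']}) :
  scalar l -> linear L -> scalar (fun p => l (L p)).
Proof. by move=> hl hL a f g; rewrite hL hl. Qed.

Lemma mcoeff_sum_scalar (K : fieldType) (k : nat) (c : 'X_{1..k} -> K) :
  scalar (fun F : {mpoly K[k]} => \sum_(m <- msupp F) F@_m * c m).
Proof.
have bounded F d : (msize F <= d)%N ->
    \sum_(m <- msupp F) F@_m * c m = \sum_(m : 'X_{1..k < d}) F@_m * c m.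
  move=> le_Fd; rewrite (ssrcomplements.big_mksub 'X_{1..k < d}) ?msupp_uniq //=.
    by rewrite big_rmcond //= => m /memN_msupp_eq0 ->; rewrite mul0r.
  by move=> m /msize_mdeg_lt /leq_trans; apply.
move=> a f g; set d := maxn (msize f) (msize g).
have hf : (msize f <= d)%N by rewrite leq_maxl.
have hg : (msize g <= d)%N by rewrite leq_maxr.
have hfg : (msize (a *: f + g) <= d)%N.
  apply: leq_trans (msizeD_le _ _) _; rewrite geq_max hg andbT.
  exact: leq_trans (msizeZ_le _ _) hf.
rewrite (bounded _ _ hf) (bounded _ _ hg) (bounded _ _ hfg) mulr_sumr -big_split /=.
by apply: eq_bigr => m _; rewrite mcoeffD mcoeffZ mulrDl mulrA.
Qed.

Section TupleSums.
Variables (T : finType) (W : nmodType).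

Lemma big_tuple_nil (F : 0.-tuple T -> W) : \sum_(t : 0.-tuple T) F t = F [tuple].
Proof. by rewrite (big_pred1 [tuple]) // => t /=; symmetry; apply/eqP; exact: tuple0. Qed.

Lemma big_tuple_cons k (F : k.+1.-tuple T -> W) :
  \sum_(t : k.+1.-tuple T) F t = \sum_(x : T) \sum_(t : k.-tuple T) F [tuple of x :: t].
Proof.
rewrite pair_big /= (reindex (fun p : T * k.-tuple T => [tuple of p.1 :: p.2])) //=.
exists (fun t : k.+1.-tuple T => (thead t, [tuple of behead t])).
  by move=> [x t] _ /=; rewrite theadE; congr (_, _); exact: val_inj.
by move=> t _ /=; rewrite [RHS]tuple_eta.
Qed.

End TupleSums.

Section CoordinateRing.
Variables (K : fieldType) (n : nat).
Local Notation Pol := (Pol K n).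
Local Notation Pol2 := (Pol2 K n).
Local Notation Nv := (Nv n).
Local Notation G := (Gv K).
Local Notation Gb := (Gbv K).
Local Notation eps := (@epsO K n).
Local Notation Delta := (@DeltaO K n).

Arguments epsO : simpl never.
Arguments DeltaO : simpl never.
HB.instance Definition _ := GRing.RMorphism.copy (@epsO K n)
  (meval (fun v : 'I_Nv => let x := enum_val v in (x.2.1 == x.2.2)%:R)).
HB.instance Definition _ := GRing.LRMorphism.copy (@DeltaO K n)
  (comp_mpoly [tuple Delta_var K (enum_val v) | v < Nv]).

Lemma variable_ind (P : Pol -> Prop) :
  (forall i j, P (G i j)) -> (forall i j, P (Gb i j)) -> forall v, P 'X_v.
Proof.
move=> PG PGb v; rewrite -(enum_valK v).
by case: (enum_val v) => [[] [i j]]; [apply: PGb | apply: PG].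
Qed.

Lemma derivation_eqG (A : pzRingType) (phi : {rmorphism Pol -> A}) L1 L2 :
  derivation_along phi L1 -> derivation_along phi L2 ->
  (forall i j, L1 (G i j) = L2 (G i j)) -> (forall i j, L1 (Gb i j) = L2 (Gb i j)) ->
  forall f, L1 f = L2 f.
Proof.
move=> d1 d2 eqG eqGb; apply: (derivation_eq d1 d2).
exact: (variable_ind (P := fun p => L1 p = L2 p)).
Qed.

Lemma rmorph_eqG (B : pzRingType) (f g : {rmorphism Pol -> B}) :
  (forall c, f c%:MP = g c%:MP) ->
  (forall i j, f (G i j) = g (G i j)) -> (forall i j, f (Gb i j) = g (Gb i j)) ->
  forall p, f p = g p.
Proof.
move=> eqC eqG eqGb; apply: (mpoly_rmorph_eq eqC).
exact: (variable_ind (P := fun p => f p = g p)).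
Qed.

Lemma sum_delta_l (F : 'I_n -> K) i : \sum_(l < n) (i == l)%:R * F l = F i.
Proof.
rewrite (bigD1 i) //= eqxx mul1r big1 ?addr0 // => l; rewrite eq_sym => /negPf ->.
by rewrite mul0r.
Qed.

Lemma sum_delta_r (F : 'I_n -> K) i : \sum_(l < n) F l * (l == i)%:R = F i.
Proof. by rewrite -[RHS](sum_delta_l F i); apply: eq_bigr => l _; rewrite mulrC eq_sym. Qed.

Lemma epsO_scalar : scalar eps.
Proof. exact: linearP. Qed.

Lemma epsOG i j : eps (G i j) = (i == j)%:R.
Proof. by rewrite /epsO /Gv mevalXU enum_rankK. Qed.

Lemma epsOGb i j : eps (Gb i j) = (i == j)%:R.
Proof. by rewrite /epsO /Gbv mevalXU enum_rankK. Qed.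

Lemma epsOC c : eps c%:MP = c.
Proof. exact: mevalC. Qed.

(* [ider M] is the left-invariant derivation with [G |-> - G M] and [Gbar |-> M Gbar]. *)
Definition ider_var (M : 'M[K]_n) (x : Idx n) : Pol :=
  let: (bar, (i, j)) := x in
  if bar then \sum_(k < n) M i k *: Gb k j else - \sum_(k < n) M k j *: G i k.

Definition ider (M : 'M[K]_n) (f : Pol) : Pol :=
  \sum_(v < Nv) mderiv v f * ider_var M (enum_val v).

Lemma ider_derivation M : derivation_along idfun (ider M).
Proof. exact: mderiv_sum_derivation. Qed.

Lemma iderZ M c f : ider M (c *: f) = c *: ider M f.
Proof. by rewrite (derivationZ (ider_derivation M)) mul_mpolyC. Qed.

Lemma iderX M v : ider M 'X_v = ider_var M (enum_val v).
Proof.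
rewrite /ider (bigD1 v) //= mderivXU eqxx mul1r big1 ?addr0 // => w /negPf nw.
by rewrite mderivXU eq_sym nw mul0r.
Qed.

Lemma iderG M i j : ider M (G i j) = - \sum_(k < n) M k j *: G i k.
Proof. by rewrite /Gv iderX enum_rankK. Qed.

Lemma iderGb M i j : ider M (Gb i j) = \sum_(k < n) M i k *: Gb k j.
Proof. by rewrite /Gbv iderX enum_rankK. Qed.

Lemma ider_lincombG M (c : 'I_n -> K) i :
  ider M (\sum_(k < n) c k *: G i k) = - \sum_(l < n) (\sum_(k < n) M l k * c k) *: G i l.
Proof.
rewrite (derivation_sum (ider_derivation M)).
under eq_bigr do rewrite iderZ iderG scalerN scaler_sumr.
rewrite sumrN exchange_big /=; congr (- _); apply: eq_bigr => l _.
by rewrite scaler_suml; apply: eq_bigr => k _; rewrite scalerA mulrC.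
Qed.

Lemma ider_lincombGb M (c : 'I_n -> K) j :
  ider M (\sum_(k < n) c k *: Gb k j) = \sum_(l < n) (\sum_(k < n) c k * M k l) *: Gb l j.
Proof.
rewrite (derivation_sum (ider_derivation M)).
under eq_bigr do rewrite iderZ iderGb scaler_sumr.
rewrite exchange_big /=; apply: eq_bigr => l _.
by rewrite scaler_suml; apply: eq_bigr => k _; rewrite scalerA.
Qed.

Lemma ider_mx0 f : ider 0 f = 0.
Proof.
rewrite /ider big1 // => v _; case: (enum_val v) => [[] [i j]] /=.
  by rewrite big1 ?mulr0 // => k _; rewrite mxE scale0r.
by rewrite big1 ?oppr0 ?mulr0 // => k _; rewrite mxE scale0r.
Qed.

Lemma ider_mx_linear f a M N : ider (a *: M + N) f = a *: ider M f + ider N f.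
Proof.
rewrite /ider scaler_sumr -big_split; apply: eq_bigr => v _ /=.
rewrite scalerAr -mulrDr; congr (_ * _).
case: (enum_val v) => [[] [i j]] /=.
  rewrite scaler_sumr -big_split; apply: eq_bigr => k _.
  by rewrite !mxE scalerDl scalerA.
rewrite scalerN -opprD scaler_sumr -big_split; congr (- _).
by apply: eq_bigr => k _; rewrite !mxE scalerDl scalerA.
Qed.

Lemma ider_mx_sum I (r : seq I) (P : pred I) (c : I -> K) (M : I -> 'M[K]_n) f :
  ider (\sum_(i <- r | P i) c i *: M i) f = \sum_(i <- r | P i) c i *: ider (M i) f.
Proof.
elim/big_rec2: _ => [|i g N _ <-]; first exact: ider_mx0.
exact: ider_mx_linear.
Qed.

Lemma ider_commutator M N f :
  ider M (ider N f) - ider N (ider M f) = ider (N *m M - M *m N) f.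
Proof.
have dM := ider_derivation M; have dN := ider_derivation N.
move: f; apply: derivation_eqG (derivation_commutator dM dN) (ider_derivation _) _ _.
- move=> i j; rewrite !iderG (derivationN dM) (derivationN dN) !ider_lincombG !opprK.
  rewrite -sumrB -sumrN; apply: eq_bigr => l _; rewrite -scalerBl -scaleNr.
  by congr (_ *: _); rewrite !mxE opprB.
- move=> i j; rewrite !iderGb !ider_lincombGb -sumrB.
  by apply: eq_bigr => l _; rewrite -scalerBl; congr (_ *: _); rewrite !mxE.
Qed.

(* [ltensor f] is [f (x) 1] and [rtensor g] is [1 (x) g]. *)
Definition ltensor (f : Pol) : Pol2 := f \mPo [tuple XL K i | i < Nv].
Definition rtensor (g : Pol) : Pol2 := g \mPo [tuple XR K i | i < Nv].
Arguments ltensor : simpl never.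
Arguments rtensor : simpl never.
HB.instance Definition _ := GRing.LRMorphism.copy ltensor (comp_mpoly [tuple XL K i | i < Nv]).
HB.instance Definition _ := GRing.LRMorphism.copy rtensor (comp_mpoly [tuple XR K i | i < Nv]).

Lemma ltensorX i : ltensor 'X_i = XL K i.
Proof. by rewrite /ltensor comp_mpolyXU -tnth_nth tnth_mktuple. Qed.

Lemma rtensorX i : rtensor 'X_i = XR K i.
Proof. by rewrite /rtensor comp_mpolyXU -tnth_nth tnth_mktuple. Qed.

Lemma mpolyX_tensor (m : 'X_{1..Nv + Nv}) :
  'X_[m] = ltensor 'X_[mnmL m] * rtensor 'X_[mnmR m].
Proof.
rewrite /ltensor /rtensor !comp_mpolyX mpolyXE_id big_split_ord /=.
by congr (_ * _); apply: eq_bigr => i _; rewrite tnth_mktuple mnmE.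
Qed.

Definition mnm_tensor (a b : 'X_{1..Nv}) : 'X_{1..Nv + Nv} :=
  [multinom (match split j with inl i => a i | inr i => b i end) | j < Nv + Nv].

Lemma mnmL_tensor a b : mnmL (mnm_tensor a b) = a.
Proof. by apply/mnmP => i; rewrite !mnmE (unsplitK (inl i)). Qed.

Lemma mnmR_tensor a b : mnmR (mnm_tensor a b) = b.
Proof. by apply/mnmP => i; rewrite !mnmE (unsplitK (inr i)). Qed.

Definition tensor_pair (phi psi : Pol -> K) (F : Pol2) : K :=
  \sum_(m <- msupp F) F@_m * (phi 'X_[mnmL m] * psi 'X_[mnmR m]).

Lemma pair2E pr u v F : pair2 pr u v F = tensor_pair (pr u) (pr v) F.
Proof. by apply: eq_bigr => m _; rewrite mulrA. Qed.

Lemma tensor_pair_scalar phi psi : scalar (tensor_pair phi psi).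
Proof. exact: mcoeff_sum_scalar. Qed.

Section ScalarPair.
Variables (phi psi : Pol -> K).
Hypotheses (hphi : scalar phi) (hpsi : scalar psi).

Lemma tensor_pair_tensor f g : tensor_pair phi psi (ltensor f * rtensor g) = phi f * psi g.
Proof.
have tensorX a b : tensor_pair phi psi (ltensor 'X_[a] * rtensor 'X_[b]) = phi 'X_[a] * psi 'X_[b].
  rewrite [ltensor _ * _](_ : _ = 'X_[mnm_tensor a b]); last first.
    by rewrite mpolyX_tensor mnmL_tensor mnmR_tensor.
  by rewrite /tensor_pair msuppX big_seq1 mcoeffX eqxx mul1r mnmL_tensor mnmR_tensor.
have tpS := tensor_pair_scalar phi psi.
rewrite {1}[f]mpolyE {1}[g]mpolyE !raddf_sum /= mulr_suml (scalar_sum tpS).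
rewrite (scalar_mpolyE hphi f) (scalar_mpolyE hpsi g) mulr_suml; apply: eq_bigr => a _.
rewrite mulr_sumr (scalar_sum tpS) mulr_sumr; apply: eq_bigr => b _.
rewrite !linearZ -scalerAl -scalerAr !(scalar_scale tpS) tensorX.
ring.
Qed.

End ScalarPair.

Lemma tensor_scalar_eq (l1 l2 : Pol2 -> K) : scalar l1 -> scalar l2 ->
  (forall f g, l1 (ltensor f * rtensor g) = l2 (ltensor f * rtensor g)) ->
  forall F, l1 F = l2 F.
Proof.
move=> h1 h2 eq12 F; rewrite (scalar_mpolyE h1) (scalar_mpolyE h2).
by apply: eq_bigr => m _; rewrite mpolyX_tensor eq12.
Qed.

(* [ider2 M] is [id (x) ider M]. *)
Definition ider2 (M : 'M[K]_n) (F : Pol2) : Pol2 :=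
  \sum_(v < Nv) mderiv (rshift Nv v) F * rtensor (ider_var M (enum_val v)).

Lemma ider2_derivation M : derivation_along idfun (ider2 M).
Proof. exact: mderiv_sum_derivation. Qed.

Lemma ider2_ltensor M f : ider2 M (ltensor f) = 0.
Proof.
pose zero (_ : Pol) : Pol2 := 0.
have dz : derivation_along ltensor zero by split => *; rewrite /zero ?addr0 ?mulr0 ?mul0r ?addr0.
apply: (derivation_eq (derivation_precomp ltensor (ider2_derivation M)) dz) => i /=.
rewrite ltensorX /ider2 big1 // => v _.
by rewrite /XL mderivXU eq_lrshift mul0r.
Qed.

Lemma ider2_rtensor M g : ider2 M (rtensor g) = rtensor (ider M g).
Proof.
apply: (derivation_eq (derivation_precomp rtensor (ider2_derivation M))
                      (derivation_postcomp rtensor (ider_derivation M))) => i /=.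
rewrite rtensorX iderX /ider2 (bigD1 i) //= big1 ?addr0.
  by rewrite /XR mderivXU eqxx mul1r.
by move=> v /negPf nv; rewrite /XR mderivXU eq_rshift eq_sym nv mul0r.
Qed.

Lemma ider2_tensor M f g : ider2 M (ltensor f * rtensor g) = ltensor f * rtensor (ider M g).
Proof. by rewrite (derivationM (ider2_derivation M)) ider2_ltensor ider2_rtensor mul0r add0r. Qed.

Lemma tensor_pair_ider phi psi M : scalar phi -> scalar psi -> forall F,
  tensor_pair phi (fun g => psi (ider M g)) F = tensor_pair phi psi (ider2 M F).
Proof.
move=> hphi hpsi; apply: tensor_scalar_eq.
- exact: tensor_pair_scalar.
- exact: scalar_comp (tensor_pair_scalar _ _) (derivation_linear (ider2_derivation M)).
- move=> f g; rewrite ider2_tensor !tensor_pair_tensor //.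
  exact: scalar_comp hpsi (derivation_linear (ider_derivation M)).
Qed.

Lemma DeltaX x : Delta 'X_(enum_rank x) = Delta_var K x.
Proof. by rewrite /DeltaO comp_mpolyXU -tnth_nth tnth_mktuple enum_rankK. Qed.

Lemma DeltaG i j : Delta (G i j) = \sum_(k < n) ltensor (G i k) * rtensor (G k j).
Proof. by rewrite /Gv DeltaX; apply: eq_bigr => k _; rewrite !(ltensorX, rtensorX). Qed.

Lemma DeltaGb i j : Delta (Gb i j) = \sum_(k < n) ltensor (Gb k j) * rtensor (Gb i k).
Proof. by rewrite /Gbv DeltaX; apply: eq_bigr => k _; rewrite !(ltensorX, rtensorX). Qed.

Lemma Delta_ider M f : Delta (ider M f) = ider2 M (Delta f).
Proof.
have d2 := ider2_derivation M.
apply: (derivation_eqG (derivation_postcomp Delta (ider_derivation M))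
                       (derivation_precomp Delta d2)) => i j /=.
- rewrite iderG DeltaG (derivation_sum d2) (raddfN Delta) (raddf_sum Delta) /=.
  under [RHS]eq_bigr do
    rewrite ider2_tensor iderG (raddfN rtensor) (raddf_sum rtensor) mulrN mulr_sumr.
  rewrite sumrN exchange_big; congr (- _); apply: eq_bigr => k _.
  rewrite linearZ /= DeltaG scaler_sumr; apply: eq_bigr => l _.
  by rewrite linearZ scalerAr.
- rewrite iderGb DeltaGb (derivation_sum d2) (raddf_sum Delta) /=.
  under [RHS]eq_bigr do rewrite ider2_tensor iderGb (raddf_sum rtensor) mulr_sumr.
  rewrite exchange_big; apply: eq_bigr => k _.
  rewrite linearZ /= DeltaGb scaler_sumr; apply: eq_bigr => l _.
  by rewrite linearZ scalerAr.
Qed.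

Definition id_tensor_eps_var (j : 'I_(Nv + Nv)) : Pol :=
  match split j with inl i => 'X_i | inr i => (eps 'X_i)%:MP end.
Definition id_tensor_eps (F : Pol2) : Pol :=
  F \mPo [tuple id_tensor_eps_var j | j < Nv + Nv].
Arguments id_tensor_eps : simpl never.
HB.instance Definition _ := GRing.LRMorphism.copy id_tensor_eps
  (comp_mpoly [tuple id_tensor_eps_var j | j < Nv + Nv]).

Lemma id_tensor_epsX j : id_tensor_eps 'X_j = id_tensor_eps_var j.
Proof. by rewrite /id_tensor_eps comp_mpolyXU -tnth_nth tnth_mktuple. Qed.

Lemma id_tensor_eps_tensor f g : id_tensor_eps (ltensor f * rtensor g) = eps g *: f.
Proof.
have idL : (id_tensor_eps \o ltensor) =1 idfun.
  apply: mpoly_rmorph_eq => [c|i] /=; first by rewrite !lrmorph_mpolyC.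
  by rewrite ltensorX id_tensor_epsX /id_tensor_eps_var (unsplitK (inl i)).
have epsR : (id_tensor_eps \o rtensor) =1 (@mpolyC _ _ \o eps).
  apply: mpoly_rmorph_eq => [c|i] /=; first by rewrite !lrmorph_mpolyC epsOC.
  by rewrite rtensorX id_tensor_epsX /id_tensor_eps_var (unsplitK (inr i)).
rewrite rmorphM /= [id_tensor_eps (ltensor f)]idL [id_tensor_eps (rtensor g)]epsR /=.
by rewrite mulrC mul_mpolyC.
Qed.

Lemma id_tensor_eps_Delta f : id_tensor_eps (Delta f) = f.
Proof.
apply: (rmorph_eqG (f := id_tensor_eps \o Delta) (g := idfun)) => [c|i j|i j] /=.
- by rewrite !lrmorph_mpolyC.
- rewrite DeltaG (raddf_sum id_tensor_eps) /= (bigD1 j) //= big1 ?addr0.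
    by rewrite id_tensor_eps_tensor epsOG eqxx scale1r.
  by move=> k /negPf nk; rewrite id_tensor_eps_tensor epsOG nk scale0r.
- rewrite DeltaGb (raddf_sum id_tensor_eps) /= (bigD1 i) //= big1 ?addr0.
    by rewrite id_tensor_eps_tensor epsOGb eqxx scale1r.
  by move=> k /negPf nk; rewrite id_tensor_eps_tensor epsOGb eq_sym nk scale0r.
Qed.

Lemma tensor_pair_eps phi : scalar phi -> forall F, tensor_pair phi eps F = phi (id_tensor_eps F).
Proof.
move=> hphi; apply: tensor_scalar_eq (tensor_pair_scalar _ _) _ _.
- by apply: scalar_comp hphi _ => a p q; rewrite linearP.
- move=> f g; rewrite tensor_pair_tensor //; last exact: epsO_scalar.
  by rewrite id_tensor_eps_tensor (scalar_scale hphi) mulrC.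
Qed.

Section Words.
Variable R : 'I_n -> 'M[K]_n.

Definition iderw (w : seq 'I_n) (f : Pol) : Pol := foldr (fun a g => ider (R a) g) f w.

Lemma iderw_linear w : linear (iderw w).
Proof.
move=> c f g; elim: w => //= a w ->.
exact: (derivation_linear (ider_derivation _)).
Qed.
HB.instance Definition _ w := GRing.isLinear.Build K Pol Pol *:%R (iderw w) (iderw_linear w).

Lemma iderw_cons a w f : iderw (a :: w) f = ider (R a) (iderw w f).
Proof. by []. Qed.

Lemma iderw_cat u v f : iderw (u ++ v) f = iderw u (iderw v f).
Proof. exact: foldr_cat. Qed.

Definition pairing (w : seq 'I_n) (f : Pol) : K := eps (iderw w f).

Lemma pairing_scalar w : scalar (pairing w).
Proof. exact: scalar_comp epsO_scalar (iderw_linear w). Qed.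

Lemma iderw_shuffle w f g : iderw w (f * g) =
  \sum_(m : (size w).-tuple bool) iderw (mask m w) f * iderw (mask (map negb m) w) g.
Proof.
elim: w => [|a w IH]; first by rewrite big_tuple_nil.
rewrite big_tuple_cons big_bool /= IH (derivation_sum (ider_derivation _)) -big_split /=.
by apply: eq_bigr => m _; rewrite (derivationM (ider_derivation _)) addrC.
Qed.

Lemma pairing_shuffle w f g : pairing w (f * g) =
  \sum_(m : (size w).-tuple bool) pairing (mask m w) f * pairing (mask (map negb m) w) g.
Proof. by rewrite /pairing iderw_shuffle rmorph_sum; apply: eq_bigr => m _; rewrite rmorphM. Qed.

Lemma iderw1 w : iderw w 1 = (w == [::])%:R.
Proof. by elim: w => [|a w IH] //=; rewrite IH (derivation_natr (ider_derivation _)). Qed.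

Lemma pairing1 w : pairing w 1 = (w == [::])%:R.
Proof. by rewrite /pairing iderw1 rmorph_nat. Qed.

Lemma pairing_lincomb u v (c : 'I_n -> K) f :
  \sum_(d < n) c d * pairing (u ++ d :: v) f =
  eps (iderw u (ider (\sum_(d < n) c d *: R d) (iderw v f))).
Proof.
rewrite ider_mx_sum linear_sum (scalar_sum epsO_scalar); apply: eq_bigr => d _.
by rewrite /pairing iderw_cat iderw_cons linearZ (scalar_scale epsO_scalar).
Qed.

Lemma tensor_pair_iderw phi psi v f : scalar phi -> scalar psi ->
  tensor_pair phi (fun g => psi (iderw v g)) (Delta f) = tensor_pair phi psi (Delta (iderw v f)).
Proof.
move=> hphi; elim: v psi => [|a v IH] psi hpsi //=.
have hDpsi : scalar (fun h => psi (ider (R a) h)).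
  exact: scalar_comp hpsi (derivation_linear (ider_derivation _)).
by rewrite (IH _ hDpsi) tensor_pair_ider // Delta_ider.
Qed.

Lemma pairing_cat u v f : pairing (u ++ v) f = tensor_pair (pairing u) (pairing v) (Delta f).
Proof.
have := tensor_pair_iderw v f (pairing_scalar u) epsO_scalar.
rewrite tensor_pair_eps ?id_tensor_eps_Delta; last exact: pairing_scalar.
by rewrite /pairing iderw_cat => <-.
Qed.

End Words.

Lemma ider_rel_inv1 M i j : ider M (rel_inv1 K i j) = 0.
Proof.
have dM := ider_derivation M.
rewrite /rel_inv1 (derivationB dM) (derivation_natr dM) subr0 (derivation_sum dM).
under eq_bigr do rewrite (derivationM dM) iderG iderGb mulNr mulr_suml mulr_sumr.
rewrite big_split /= sumrN addrC; apply/eqP; rewrite subr_eq0; apply/eqP.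
rewrite exchange_big; apply: eq_bigr => k _; apply: eq_bigr => l _.
by rewrite -scalerAl -scalerAr.
Qed.

Lemma ider_rel_inv2 M i j : ider M (rel_inv2 K i j) =
  \sum_(l < n) M i l *: rel_inv2 K l j - \sum_(l < n) M l j *: rel_inv2 K i l.
Proof.
have dM := ider_derivation M.
have unfold_rel (c : 'I_n -> K) (X : 'I_n -> 'I_n -> Pol) (l0 : 'I_n) (d : 'I_n -> bool) :
    (forall l, d l = (l == l0)) ->
    \sum_(l < n) c l *: (\sum_(k < n) X l k - (d l)%:R) =
    \sum_(l < n) \sum_(k < n) c l *: X l k - c l0 *: 1.
  move=> dE; under eq_bigr do rewrite scalerBr scaler_sumr.
  rewrite sumrB [X in _ - X](bigD1 l0) //= dE eqxx [X in _ - (_ + X)]big1 ?addr0 //.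
  by move=> l /negPf nl; rewrite dE nl scaler0.
rewrite (unfold_rel _ _ j (fun l => l == j)) // (unfold_rel _ _ i (eq_op i)); last first.
  by move=> l; rewrite eq_sym.
rewrite opprB addrA subrK /rel_inv2 (derivationB dM) (derivation_natr dM) subr0.
rewrite (derivation_sum dM).
under eq_bigr do rewrite (derivationM dM) iderG iderGb mulrN mulr_suml mulr_sumr.
rewrite big_split /= sumrN; congr (_ - _); rewrite exchange_big.
  by apply: eq_bigr => l _; apply: eq_bigr => k _; rewrite scalerAl.
by apply: eq_bigr => l _; apply: eq_bigr => k _; rewrite scalerAr.
Qed.

Definition hom_quad (c : 'I_n -> 'I_n -> 'I_n -> K) (i j k : 'I_n) : Pol :=
  \sum_(l < n) \sum_(m < n) c k l m *: (G l i * G m j).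

Lemma ider_hom_quad M c i j k : ider M (hom_quad c i j k) =
  - \sum_(p < n) M p i *: hom_quad c p j k - \sum_(p < n) M p j *: hom_quad c i p k.
Proof.
have dM := ider_derivation M.
have pull_sum (d : 'I_n -> K) (X : 'I_n -> 'I_n -> 'I_n -> Pol) :
    \sum_(l < n) \sum_(m < n) c k l m *: (\sum_(p < n) d p *: X l m p) =
    \sum_(p < n) d p *: \sum_(l < n) \sum_(m < n) c k l m *: X l m p.
  under [RHS]eq_bigr do rewrite scaler_sumr; rewrite [RHS]exchange_big.
  apply: eq_bigr => l _; under [RHS]eq_bigr do rewrite scaler_sumr.
  rewrite [RHS]exchange_big; apply: eq_bigr => m _; rewrite scaler_sumr.
  by apply: eq_bigr => p _; rewrite !scalerA mulrC.
rewrite /hom_quad (derivation_sum dM); under eq_bigr do rewrite (derivation_sum dM).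
under eq_bigr do under eq_bigr do
  rewrite iderZ (derivationM dM) !iderG mulNr mulrN mulr_suml mulr_sumr scalerDr !scalerN.
under eq_bigr do rewrite big_split /= !sumrN.
rewrite big_split /= !sumrN -!pull_sum.
congr (- _ - _); apply: eq_bigr => l _; apply: eq_bigr => m _; congr (_ *: _);
  apply: eq_bigr => p _.
- by rewrite scalerAl.
- by rewrite scalerAr.
Qed.

End CoordinateRing.

Arguments epsO_scalar {K n}.

Section Coordinates.
Variables (K : fieldType) (V : vectType K) (n : nat) (b : n.-tuple V).
Hypothesis hb : basis_of fullv b.

Lemma basis_expand u : u = \sum_(i < n) coord b i u *: tnth b i.
Proof.
rewrite {1}(coord_basis hb (memvf u)); apply: eq_bigr => i _.
by rewrite (tnth_nth 0).
Qed.

Lemma coord_change (b' : n.-tuple V) u l :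
  \sum_(k < n) coord b k u * coord b' l (tnth b k) = coord b' l u.
Proof.
rewrite [in RHS](basis_expand u) linear_sum; apply: eq_bigr => k _.
by rewrite linearZ.
Qed.

End Coordinates.

Section Bracket.
Variables (K : fieldType) (V : vectType K) (br : V -> V -> V) (n : nat) (b : n.-tuple V).
Hypotheses (hbil : bilinear_bracket br) (hleib : right_leibniz br) (hb : basis_of fullv b).
Local Notation C := (Cst br b).
Local Notation Pol := (Pol K n).
Local Notation G := (Gv K).
Local Notation Gb := (Gbv K).
Local Notation eps := (@epsO K n).

Let brl z : {linear V -> V} :=
  HB.pack (br^~ z) (GRing.isLinear.Build K V V *:%R _ (fun a x y => hbil.1 a x y z)).
Let brr x : {linear V -> V} :=
  HB.pack (br x) (GRing.isLinear.Build K V V *:%R _ (fun a y z => hbil.2 a y z x)).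

Lemma bracket0l z : br 0 z = 0. Proof. exact: (linear0 (brl z)). Qed.
Lemma bracketZl a x z : br (a *: x) z = a *: br x z. Proof. exact: (linearZ_LR (brl z)). Qed.
Lemma bracketZr a x z : br x (a *: z) = a *: br x z. Proof. exact: (linearZ_LR (brr x)). Qed.
Lemma bracket_suml I (r : seq I) (P : pred I) F z :
  br (\sum_(i <- r | P i) F i) z = \sum_(i <- r | P i) br (F i) z.
Proof. exact: (linear_sum (brl z)). Qed.
Lemma bracket_sumr I (r : seq I) (P : pred I) F x :
  br x (\sum_(i <- r | P i) F i) = \sum_(i <- r | P i) br x (F i).
Proof. exact: (linear_sum (brr x)). Qed.

Lemma coord_bracket_l u z k :
  \sum_(p < n) coord b p u * coord b k (br (tnth b p) z) = coord b k (br u z).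
Proof.
rewrite [in RHS](basis_expand hb u) bracket_suml linear_sum; apply: eq_bigr => p _.
by rewrite bracketZl linearZ.
Qed.

Lemma coord_bracket_r u x k :
  \sum_(p < n) coord b p u * coord b k (br x (tnth b p)) = coord b k (br x u).
Proof.
rewrite [in RHS](basis_expand hb u) bracket_sumr linear_sum; apply: eq_bigr => p _.
by rewrite bracketZr linearZ.
Qed.

Definition rad_mx (v : V) : 'M[K]_n := \matrix_(k, l) coord b k (br (tnth b l) v).
Definition rmul_mx (a : 'I_n) : 'M[K]_n := rad_mx (tnth b a).

Lemma rad_mx_lincomb z : \sum_(d < n) coord b d z *: rmul_mx d = rad_mx z.
Proof.
apply/matrixP => k l; rewrite summxE mxE.
by under eq_bigr do rewrite !mxE; rewrite coord_bracket_r.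
Qed.

Lemma rmul_mx_commutator a c :
  rmul_mx c *m rmul_mx a - rmul_mx a *m rmul_mx c = \sum_(d < n) C d a c *: rmul_mx d.
Proof.
have rmul2 k l u v : (rmul_mx u *m rmul_mx v) k l =
    coord b k (br (br (tnth b l) (tnth b v)) (tnth b u)).
  by rewrite mxE -coord_bracket_l; apply: eq_bigr => p _; rewrite !mxE mulrC.
apply/matrixP => k l; rewrite mxE [X in _ + X]mxE !rmul2 summxE.
under eq_bigr do rewrite !mxE.
by rewrite coord_bracket_r -linearB /= hleib addrAC subrr add0r.
Qed.

Lemma rmul_mx_hom a i j s :
  \sum_(r < n) C r i j * rmul_mx a s r =
  \sum_(p < n) rmul_mx a p i * C s p j + \sum_(p < n) rmul_mx a p j * C s i p.
Proof.
under eq_bigr do rewrite mxE.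
under [in RHS]eq_bigr do rewrite mxE.
under [X in _ + X]eq_bigr do rewrite mxE.
by rewrite !coord_bracket_l coord_bracket_r -linearD /= hleib.
Qed.

Definition left_annihilator : {vspace V} :=
  (\bigcap_(l < n) lker (linfun (brr (tnth b l))))%VS.

Lemma mem_left_annihilator z : z \in left_annihilator <-> forall x, br x z = 0.
Proof.
split => [|z0]; last first.
  by apply/subv_bigcapP => l _; rewrite -memvE memv_ker lfunE /= z0.
move/subv_bigcapP => zl x; rewrite (basis_expand hb x) bracket_suml big1 // => i _.
rewrite bracketZl; have := zl i isT; rewrite -memvE memv_ker lfunE /= => /eqP ->.
exact: scaler0.
Qed.

Lemma leib_ideal_annihilated z : in_leib_ideal br z -> forall x, br x z = 0.
Proof.
move=> hz; apply/mem_left_annihilator/hz => [x|x s /mem_left_annihilator s0|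
  x s /mem_left_annihilator s0]; apply/mem_left_annihilator => y.
- by have /eqP := hleib y x x; rewrite addrC -subr_eq subrr => /eqP <-.
- by have := hleib y x s; rewrite !s0 bracket0l add0r => <-.
- by have := hleib y s x; rewrite !s0 bracket0l add0r => <-.
Qed.

Lemma rad_mx_leib z : in_leib_ideal br z -> rad_mx z = 0.
Proof.
by move=> hz; apply/matrixP => k l; rewrite !mxE leib_ideal_annihilated // linear0.
Qed.

Inductive rel_ideal : Pol -> Prop :=
| rel_ideal0 : rel_ideal 0
| rel_idealD f g : rel_ideal f -> rel_ideal g -> rel_ideal (f + g)
| rel_idealM h f : rel_ideal f -> rel_ideal (h * f)
| rel_ideal_hom i j k : rel_ideal (rel_hom br b i j k)
| rel_ideal_inv1 i j : rel_ideal (rel_inv1 K i j)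
| rel_ideal_inv2 i j : rel_ideal (rel_inv2 K i j).

Lemma rel_idealZ c f : rel_ideal f -> rel_ideal (c *: f).
Proof. by move=> If; rewrite -mul_mpolyC; apply: rel_idealM. Qed.

Lemma rel_idealB f g : rel_ideal f -> rel_ideal g -> rel_ideal (f - g).
Proof. by move=> If Ig; apply: rel_idealD If _; rewrite -scaleN1r; apply: rel_idealZ. Qed.

Lemma rel_ideal_lincomb (c : 'I_n -> K) (F : 'I_n -> Pol) :
  (forall p, rel_ideal (F p)) -> rel_ideal (\sum_(p < n) c p *: F p).
Proof.
move=> IF; apply: big_ind => [|f g|p _];
  [exact: rel_ideal0 | exact: rel_idealD | exact: rel_idealZ].
Qed.

Lemma rel_homE i j k : rel_hom br b i j k = hom_quad C i j k - \sum_(r < n) C r i j *: G k r.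
Proof. by []. Qed.

Lemma ider_rel_hom a i j k : ider (rmul_mx a) (rel_hom br b i j k) =
  - \sum_(p < n) rmul_mx a p i *: rel_hom br b p j k
  - \sum_(p < n) rmul_mx a p j *: rel_hom br b i p k.
Proof.
set R := rmul_mx a.
have lincomb_hom (c : 'I_n -> K) (X : 'I_n -> Pol) (d : 'I_n -> 'I_n -> K) :
    \sum_(p < n) c p *: (X p - \sum_(s < n) d p s *: G k s) =
    \sum_(p < n) c p *: X p - \sum_(s < n) (\sum_(p < n) c p * d p s) *: G k s.
  under eq_bigr do rewrite scalerBr scaler_sumr.
  rewrite sumrB; congr (_ - _); rewrite exchange_big; apply: eq_bigr => s _.
  by rewrite scaler_suml; apply: eq_bigr => p _; rewrite scalerA.
have -> : \sum_(p < n) R p i *: rel_hom br b p j k =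
    \sum_(p < n) R p i *: hom_quad C p j k - \sum_(s < n) (\sum_(p < n) R p i * C s p j) *: G k s.
  by rewrite -lincomb_hom.
have -> : \sum_(p < n) R p j *: rel_hom br b i p k =
    \sum_(p < n) R p j *: hom_quad C i p k - \sum_(s < n) (\sum_(p < n) R p j * C s i p) *: G k s.
  by rewrite -lincomb_hom.
have hom_sum : \sum_(l < n) (\sum_(r < n) R l r * C r i j) *: G k l =
    \sum_(s < n) (\sum_(p < n) R p i * C s p j) *: G k s +
    \sum_(s < n) (\sum_(p < n) R p j * C s i p) *: G k s.
  rewrite -big_split; apply: eq_bigr => s _; rewrite /= -scalerDl -rmul_mx_hom.
  by congr (_ *: _); apply: eq_bigr => r _; rewrite mulrC.
rewrite rel_homE (derivationB (ider_derivation R)) ider_hom_quad ider_lincombG opprK hom_sum.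
ring.
Qed.

Lemma ider_rel_ideal a f : rel_ideal f -> rel_ideal (ider (rmul_mx a) f).
Proof.
have dR := ider_derivation (rmul_mx a).
elim=> {f} [|f g _ If _ Ig|h f Hf If|i j k|i j|i j].
- by rewrite (derivation0 dR); exact: rel_ideal0.
- by rewrite (derivationD dR); apply: rel_idealD.
- by rewrite (derivationM dR) /=; apply: rel_idealD; apply: rel_idealM.
- rewrite ider_rel_hom -opprD -scaleN1r; apply: rel_idealZ.
  by apply: rel_idealD; apply: rel_ideal_lincomb => p; apply: rel_ideal_hom.
- by rewrite ider_rel_inv1; exact: rel_ideal0.
- rewrite ider_rel_inv2; apply: rel_idealB;
    by apply: rel_ideal_lincomb => p; apply: rel_ideal_inv2.
Qed.

Lemma epsO_rel_ideal f : rel_ideal f -> eps f = 0.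
Proof.
elim=> {f} [|f g _ ef _ eg|h f _ ef|i j k|i j|i j].
- exact: rmorph0.
- by rewrite rmorphD /= ef eg addr0.
- by rewrite rmorphM /= ef mulr0.
- rewrite rel_homE (scalarB epsO_scalar) !(scalar_sum epsO_scalar).
  under eq_bigr do rewrite (scalar_sum epsO_scalar).
  under eq_bigr do under eq_bigr do rewrite (scalar_scale epsO_scalar) rmorphM /= !epsOG mulrA.
  under [X in _ - X]eq_bigr do rewrite (scalar_scale epsO_scalar) epsOG.
  under eq_bigr do rewrite sum_delta_r.
  rewrite sum_delta_r (eq_bigr (fun l => (k == l)%:R * C l i j)) ?sum_delta_l ?subrr //.
  by move=> l _; rewrite mulrC.
- rewrite (scalarB epsO_scalar) (scalar_sum epsO_scalar) rmorph_nat.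
  by under eq_bigr do rewrite rmorphM /= epsOG epsOGb; rewrite sum_delta_l subrr.
- rewrite (scalarB epsO_scalar) (scalar_sum epsO_scalar) rmorph_nat.
  by under eq_bigr do rewrite rmorphM /= epsOG epsOGb; rewrite sum_delta_l subrr.
Qed.

Local Notation prb := (pairing rmul_mx).

Lemma pairing_lie u v a c f :
  prb (u ++ a :: c :: v) f - prb (u ++ c :: a :: v) f
  - \sum_(d < n) C d a c * prb (u ++ d :: v) f = 0.
Proof.
rewrite pairing_lincomb -rmul_mx_commutator -ider_commutator /pairing !iderw_cat !iderw_cons.
by rewrite -!(scalarB epsO_scalar) -linearB subrr rmorph0.
Qed.

Lemma pairing_leib u v z f : in_leib_ideal br z ->
  \sum_(d < n) coord b d z * prb (u ++ d :: v) f = 0.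
Proof.
by move=> hz; rewrite pairing_lincomb rad_mx_lincomb rad_mx_leib // ider_mx0 linear0 rmorph0.
Qed.

Lemma pairing_rel w g i j k :
  prb w (g * rel_hom br b i j k) = 0 /\ prb w (g * rel_inv1 K i j) = 0 /\
  prb w (g * rel_inv2 K i j) = 0.
Proof.
have iderw_rel f : rel_ideal f -> rel_ideal (iderw rmul_mx w f).
  by elim: w => //= a w IH /IH; apply: ider_rel_ideal.
rewrite /pairing; split; [|split]; apply: epsO_rel_ideal; apply: iderw_rel; apply: rel_idealM.
- exact: rel_ideal_hom.
- exact: rel_ideal_inv1.
- exact: rel_ideal_inv2.
Qed.

Lemma pairing_norm i j k : prb [:: k] (G i j) = - C i j k.
Proof.
rewrite /pairing iderw_cons iderG (scalarN epsO_scalar) (scalar_sum epsO_scalar).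
under eq_bigr do rewrite (scalar_scale epsO_scalar) epsOG mxE mulrC.
by rewrite sum_delta_l.
Qed.

Lemma pairing_is_hopf : is_hopf_pairing br b prb.
Proof.
split; first exact: pairing_scalar.
split; first exact: pairing_lie.
split; first exact: pairing_leib.
split; first exact: pairing_rel.
split; first by move=> w f g; rewrite pairing_shuffle.
split; first exact: pairing1.
split; first by move=> u v f; rewrite pair2E pairing_cat.
split; first by [].
exact: pairing_norm.
Qed.

Section Uniqueness.
Variable pr : seq 'I_n -> Pol -> K.
Hypothesis hpr : is_hopf_pairing br b pr.

Lemma hopf_pairing_derivation a : derivation_along eps (pr [:: a]).
Proof.
case: hpr => hlin [_ [_ [_ [hsh [_ [_ [h0 _]]]]]]].
split => [p q|c p|p q].
- exact: (scalarD (hlin [:: a])).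
- by rewrite (scalar_scale (hlin [:: a])) /= epsOC.
- by rewrite -hsh big_tuple_cons big_bool /= !big_tuple_nil /= !h0 addrC.
Qed.

Lemma hopf_pairingG a i j : pr [:: a] (G i j) = - C i j a.
Proof. by case: hpr => _ [_ [_ [_ [_ [_ [_ [_ hn]]]]]]]. Qed.

(* Pairing [y_a] with [G Gbar = 1] forces the value on [Gbar]. *)
Lemma hopf_pairingGb a i j : pr [:: a] (Gbv K i j) = C i j a.
Proof.
have dA := hopf_pairing_derivation a.
case: hpr => _ [_ [_ [hrel _]]].
have [_ [/eqP]] := hrel [:: a] 1 i j i; rewrite mul1r /rel_inv1.
rewrite (derivationB dA) (derivation_natr dA) subr0 (derivation_sum dA).
under eq_bigr do rewrite (derivationM dA) /= epsOG epsOGb.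
rewrite big_split /= sum_delta_l (eq_bigr (fun k => pr [:: a] (G i k) * (k == j)%:R)) //.
by rewrite sum_delta_r hopf_pairingG addrC addr_eq0 opprK => /eqP.
Qed.

End Uniqueness.

Lemma hopf_pairing_unique pr : is_hopf_pairing br b pr -> forall w f, pr w f = prb w f.
Proof.
move=> hpr; have single a f : pr [:: a] f = prb [:: a] f.
  move: f; apply: derivation_eqG (hopf_pairing_derivation hpr a)
    (hopf_pairing_derivation pairing_is_hopf a) _ _ => i j.
    by rewrite (hopf_pairingG hpr) (hopf_pairingG pairing_is_hopf).
  by rewrite (hopf_pairingGb hpr) (hopf_pairingGb pairing_is_hopf).
case: hpr => _ [_ [_ [_ [_ [_ [hcat [h0 _]]]]]]].
elim=> [|a w IH] f; first by rewrite h0.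
rewrite -cat1s hcat pairing_cat pair2E; apply: eq_bigr => m _.
by rewrite single IH.
Qed.

End Bracket.

Lemma rad_mx_base_change (K : fieldType) (V : vectType K) (br : V -> V -> V) (n : nat)
    (b b' : n.-tuple V) : bilinear_bracket br -> basis_of fullv b -> basis_of fullv b' ->
  forall v e j, \sum_(k < n) coord b e (tnth b' k) * rad_mx br b' v k j =
                \sum_(l < n) rad_mx br b v e l * coord b l (tnth b' j).
Proof.
move=> hbil hb hb' v e j.
under eq_bigr do rewrite mxE mulrC.
under [RHS]eq_bigr do rewrite mxE mulrC.
by rewrite coord_change // coord_bracket_l.
Qed.

Arguments phiO : simpl never.

Section BaseChange.
Variables (K : fieldType) (V : vectType K) (br : V -> V -> V) (n : nat) (b b' : n.-tuple V).
Hypotheses (hbil : bilinear_bracket br) (hb : basis_of fullv b) (hb' : basis_of fullv b').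
Local Notation Pol := (Pol K n).
Local Notation G := (Gv K).
Local Notation Gb := (Gbv K).
Local Notation eps := (@epsO K n).
Local Notation phi := (phiO b b').
Local Notation A s c := (coord b s (tnth b' c)).
Local Notation Ai i a := (coord b' i (tnth b a)).

HB.instance Definition _ :=
  GRing.LRMorphism.copy phi (comp_mpoly [tuple phiO_var b b' (enum_val v) | v < Nv n]).

Lemma base_changeK i j : \sum_(a < n) Ai i a * A a j = (i == j)%:R.
Proof.
under eq_bigr do rewrite mulrC.
by rewrite coord_change // (tnth_nth 0) coord_free ?(basis_free hb') // eq_sym.
Qed.

Lemma phiOX x : phi 'X_(enum_rank x) = phiO_var b b' x.
Proof. by rewrite /phiO comp_mpolyXU -tnth_nth tnth_mktuple enum_rankK. Qed.

Lemma phiOG i j : phi (G i j) = \sum_(a < n) \sum_(c < n) (Ai i a * A c j) *: G a c.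
Proof. exact: phiOX. Qed.

Lemma phiOGb i j : phi (Gb i j) = \sum_(a < n) \sum_(c < n) (Ai i a * A c j) *: Gb a c.
Proof. exact: phiOX. Qed.

Lemma epsO_phiO f : eps (phi f) = eps f.
Proof.
have eps_phi (X : 'I_n -> 'I_n -> Pol) i j : (forall a c, eps (X a c) = (a == c)%:R) ->
    eps (\sum_(a < n) \sum_(c < n) (Ai i a * A c j) *: X a c) = (i == j)%:R.
  move=> epsX; rewrite -base_changeK (scalar_sum epsO_scalar); apply: eq_bigr => a _.
  rewrite (scalar_sum epsO_scalar) (bigD1 a) //= (scalar_scale epsO_scalar) epsX eqxx mulr1.
  rewrite big1 ?addr0 // => c /negPf nc.
  by rewrite (scalar_scale epsO_scalar) epsX eq_sym nc mulr0.
apply: (rmorph_eqG (f := eps \o phi) (g := eps)) => [c|i j|i j] /=.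
- by rewrite lrmorph_mpolyC.
- by rewrite phiOG epsOG eps_phi // => a c; rewrite epsOG.
- by rewrite phiOGb epsOGb eps_phi // => a c; rewrite epsOGb.
Qed.

Lemma phiO_ider c f :
  phi (ider (rmul_mx br b' c) f) = ider (rad_mx br b (tnth b' c)) (phi f).
Proof.
set M := rad_mx br b (tnth b' c).
have regroup (d : 'I_n -> K) (e : 'I_n -> 'I_n -> 'I_n -> K) (X : 'I_n -> 'I_n -> Pol) :
    \sum_(k < n) d k *: \sum_(a < n) \sum_(l < n) e k a l *: X a l =
    \sum_(a < n) \sum_(l < n) (\sum_(k < n) d k * e k a l) *: X a l.
  under eq_bigr do rewrite scaler_sumr; rewrite exchange_big; apply: eq_bigr => a _.
  under eq_bigr do rewrite scaler_sumr; rewrite exchange_big; apply: eq_bigr => l _.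
  by rewrite scaler_suml; apply: eq_bigr => k _; rewrite scalerA.
have dM := ider_derivation M.
apply: (derivation_eqG (derivation_postcomp phi (ider_derivation _))
                       (derivation_precomp phi dM)) => i j /=.
- rewrite iderG (raddfN phi) (raddf_sum phi) /=.
  under eq_bigr do rewrite linearZ /= phiOG.
  rewrite regroup phiOG (derivation_sum dM) -sumrN; apply/eq_bigr => a _.
  rewrite ider_lincombG; congr (- _); apply/eq_bigr => l _; congr (_ *: _).
  under eq_bigr do rewrite mulrCA [_ * A l _]mulrC.
  rewrite -mulr_sumr rad_mx_base_change // mulr_sumr.
  by apply/eq_bigr => e _; rewrite mulrCA.
- rewrite iderGb (raddf_sum phi) /=.
  under eq_bigr do rewrite linearZ /= phiOGb.
  rewrite regroup phiOGb [in RHS]exchange_big (derivation_sum dM) /=.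
  under [RHS]eq_bigr do rewrite ider_lincombGb.
  rewrite [RHS]exchange_big; apply/eq_bigr => l _; apply/eq_bigr => e _; congr (_ *: _).
  under eq_bigr do rewrite mulrA [_ * A e j]mulrC.
  rewrite -mulr_sumr -rad_mx_base_change // mulr_sumr.
  by apply/eq_bigr => a _; rewrite mulrA [A e j * _]mulrC.
Qed.

Lemma phiO_iderw w f : phi (iderw (rmul_mx br b') w f) =
  \sum_(s : (size w).-tuple 'I_n)
     (\prod_(t < size w) A (tnth s t) (tnth (in_tuple w) t)) *: iderw (rmul_mx br b) s (phi f).
Proof.
elim: w => [|c w IH]; first by rewrite big_tuple_nil big_ord0 scale1r.
rewrite iderw_cons phiO_ider IH (derivation_sum (ider_derivation _)) big_tuple_cons.
rewrite -(rad_mx_lincomb hbil hb); under eq_bigr do rewrite iderZ ider_mx_sum scaler_sumr.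
rewrite exchange_big; apply/eq_bigr => x _; apply/eq_bigr => s _.
rewrite big_ord_recl tnth0 (tnth_nth c) /= scalerA mulrC.
by congr ((_ * _) *: _); apply/eq_bigr => t _; rewrite tnthS !(tnth_nth c) lift0.
Qed.

Lemma pairing_transport w f :
  pairing (rmul_mx br b') w f = transport b b' (pairing (rmul_mx br b)) w f.
Proof.
rewrite /pairing -epsO_phiO phiO_iderw (scalar_sum epsO_scalar); apply/eq_bigr => s _.
by rewrite (scalar_scale epsO_scalar).
Qed.

End BaseChange.

Theorem proposition3p4 (K : fieldType) (V : vectType K) (br : V -> V -> V) (n : nat) :
  bilinear_bracket br -> right_leibniz br -> \dim (fullv : {vspace V}) = n ->
  (* existence and uniqueness, for every ordered basis b *)
  (forall b : n.-tuple V, basis_of fullv b ->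
     exists pr : seq 'I_n -> Pol K n -> K,
       is_hopf_pairing br b pr /\
       (forall pr' : seq 'I_n -> Pol K n -> K, is_hopf_pairing br b pr' ->
          forall w f, pr' w f = pr w f)) /\
  (* independence of the basis *)
  (forall b b' : n.-tuple V, basis_of fullv b -> basis_of fullv b' ->
     forall pr pr' : seq 'I_n -> Pol K n -> K,
       is_hopf_pairing br b pr -> is_hopf_pairing br b' pr' ->
       forall w f, pr' w f = transport b b' pr w f).
Proof.
move=> hbil hleib _; split.
  move=> b hb; exists (pairing (rmul_mx br b)).
  by split; [exact: pairing_is_hopf | exact: hopf_pairing_unique].
move=> b b' hb hb' pr pr' hpr hpr' w f.
rewrite (hopf_pairing_unique hbil hleib hb' hpr') (pairing_transport hbil hb hb').
by apply/eq_bigr => s _; rewrite (hopf_pairing_unique hbil hleib hb hpr).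
Qed.
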